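(* $\mathbb{P}(\mathsf{FDqRA})=\mathsf{EDqRA}$ (up to isomorphism): every algebra in $\mathsf{EDqRA}$ is isomorphic to a direct product of algebras in $\mathsf{FDqRA}$, and every direct product of a family of algebras in $\mathsf{FDqRA}$ is isomorphic to an algebra in $\mathsf{EDqRA}$.
   Context: For binary relations: converse $R^\smile$; composition $R\circ S=\{(x,y)\mid\exists z\,((x,z)\in R,(z,y)\in S)\}$; functions are identified with their graphs. Order automorphism: bijection with $x\le y\iff\alpha(x)\le\alpha(y)$; dual order automorphism: bijection with $x\le y\iff\beta(y)\le\beta(x)$; self-inverse: $\beta\circ\beta=\mathrm{id}$. Let $(X,\le)$ be a poset, $E$ an equivalence relation on $X$ with ${\le}\subseteq E$, $\alpha$ an order automorphism and $\beta$ a self-inverse dual order automorphism of $(X,\le)$ with $\alpha,\beta\subseteq E$ and $\beta=\alpha\circ\beta\circ\alpha$. Order $E$ by $(u,v)\preceq(x,y)$ iff $x\le u$ and $v\le y$, write $\mathbf E=(E,\preceq)$, and let $R^c=E\setminus R$. Then $\mathbf{Dq}(\mathbf E)=\langle\mathsf{Up}(\mathbf E),\cap,\cup,\circ,1,0,{\sim},-,'\rangle$ is the algebra of up-sets of $\mathbf E$ with $1={\le}$, $0=\alpha\circ({\le}^c)^\smile$, ${\sim}R=(R^\smile\circ0^c)^c$, $-R=(0^c\circ R^\smile)^c$, $R'=\alpha\circ\beta\circ R^c\circ\beta$. $\mathsf{EDqRA}$ is the class of all such algebras $\mathbf{Dq}(\mathbf E)$ (equivalence distributive quasi relation algebras);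 $\mathsf{FDqRA}$ is the class of those with $E=X^2$ (full distributive quasi relation algebras). $\mathbb{P}(\mathsf K)$ denotes the class of direct products of families of members of $\mathsf K$. *)

Definition rel (X : Type) : Type := X -> X -> Prop.

Definition conv {X : Type} (R : rel X) : rel X := fun x y => R y x.
Definition rcomp {X : Type} (R S : rel X) : rel X :=
  fun x y => exists z, R x z /\ S z y.
Definition graph {X : Type} (f : X -> X) : rel X := fun x y => f x = y.
Definition idrel {X : Type} : rel X := fun x y => x = y.
Definition rcompl {X : Type} (E R : rel X) : rel X := fun x y => E x y /\ ~ R x y.
Definition rmeet {X : Type} (R S : rel X) : rel X := fun x y => R x y /\ S x y.
Definition rjoin {X : Type} (R S : rel X) : rel X := fun x y => R x y \/ S x y.
Definition fullrel {X : Type} : rel X := fun _ _ => True.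
Definition subrel {X : Type} (R S : rel X) : Prop := forall x y, R x y -> S x y.
Definition releq {X : Type} (R S : rel X) : Prop := forall x y, R x y <-> S x y.

Definition is_poset {X : Type} (le : rel X) : Prop :=
  (forall x, le x x) /\
  (forall x y, le x y -> le y x -> x = y) /\
  (forall x y z, le x y -> le y z -> le x z).

Definition is_equivalence {X : Type} (E : rel X) : Prop :=
  (forall x, E x x) /\
  (forall x y, E x y -> E y x) /\
  (forall x y z, E x y -> E y z -> E x z).

Definition is_bijection {X : Type} (f : X -> X) : Prop :=
  (forall x y, f x = f y -> x = y) /\ (forall y, exists x, f x = y).

Definition order_automorphism {X : Type} (le : rel X) (a : X -> X) : Prop :=
  is_bijection a /\ forall x y, le x y <-> le (a x) (a y).

Definition dual_order_automorphism {X : Type} (le : rel X) (b : X -> X) : Prop :=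
  is_bijection b /\ forall x y, le x y <-> le (b y) (b x).

Definition self_inverse {X : Type} (b : X -> X) : Prop :=
  releq (rcomp (graph b) (graph b)) idrel.

Definition DqFrame (X : Type) (le : rel X) (E : rel X) (alpha beta : X -> X) : Prop :=
  is_poset le /\
  is_equivalence E /\
  subrel le E /\
  order_automorphism le alpha /\
  dual_order_automorphism le beta /\
  self_inverse beta /\
  subrel (graph alpha) E /\
  subrel (graph beta) E /\
  releq (graph beta) (rcomp (rcomp (graph alpha) (graph beta)) (graph alpha)).

Definition Eprec {X : Type} (le : rel X) (u v x y : X) : Prop := le x u /\ le v y.

Definition is_upset {X : Type} (le E : rel X) (R : rel X) : Prop :=
  subrel R E /\
  (forall u v x y, R u v -> E x y -> Eprec le u v x y -> R x y).

(** An algebra is presented by an ambient type [car] together with a predicate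
    [mem] singling out the elements of the algebra; the operations are given on
    the ambient type (and, by the paper, preserve [mem]). *)
Record Alg : Type := MkAlg {
  car : Type;
  mem : car -> Prop;
  a_meet : car -> car -> car;
  a_join : car -> car -> car;
  a_comp : car -> car -> car;
  a_one : car;
  a_zero : car;
  a_tilde : car -> car;
  a_minus : car -> car;
  a_prime : car -> car
}.

Definition Alg_iso (A B : Alg) : Prop :=
  exists f : car A -> car B,
    (forall x, mem A x -> mem B (f x)) /\
    (forall x y, mem A x -> mem A y -> f x = f y -> x = y) /\
    (forall y, mem B y -> exists x, mem A x /\ f x = y) /\
    (forall x y, mem A x -> mem A y -> f (a_meet A x y) = a_meet B (f x) (f y)) /\
    (forall x y, mem A x -> mem A y -> f (a_join A x y) = a_join B (f x) (f y)) /\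
    (forall x y, mem A x -> mem A y -> f (a_comp A x y) = a_comp B (f x) (f y)) /\
    f (a_one A) = a_one B /\
    f (a_zero A) = a_zero B /\
    (forall x, mem A x -> f (a_tilde A x) = a_tilde B (f x)) /\
    (forall x, mem A x -> f (a_minus A x) = a_minus B (f x)) /\
    (forall x, mem A x -> f (a_prime A x) = a_prime B (f x)).

Definition Alg_prod (I : Type) (F : I -> Alg) : Alg :=
  {| car := forall i, car (F i);
     mem := fun x => forall i, mem (F i) (x i);
     a_meet := fun x y i => a_meet (F i) (x i) (y i);
     a_join := fun x y i => a_join (F i) (x i) (y i);
     a_comp := fun x y i => a_comp (F i) (x i) (y i);
     a_one := fun i => a_one (F i);
     a_zero := fun i => a_zero (F i);
     a_tilde := fun x i => a_tilde (F i) (x i);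
     a_minus := fun x i => a_minus (F i) (x i);
     a_prime := fun x i => a_prime (F i) (x i) |}.

Section Dq.
Context {X : Type} (le E : rel X) (alpha beta : X -> X).

Definition Dq_one : rel X := le.
Definition Dq_zero : rel X := rcomp (graph alpha) (conv (rcompl E le)).
Definition Dq_tilde (R : rel X) : rel X :=
  rcompl E (rcomp (conv R) (rcompl E Dq_zero)).
Definition Dq_minus (R : rel X) : rel X :=
  rcompl E (rcomp (rcompl E Dq_zero) (conv R)).
Definition Dq_prime (R : rel X) : rel X :=
  rcomp (rcomp (rcomp (graph alpha) (graph beta)) (rcompl E R)) (graph beta).
End Dq.

Definition Dq (X : Type) (le E : rel X) (alpha beta : X -> X) : Alg :=
  {| car := rel X;
     mem := is_upset le E;
     a_meet := @rmeet X;
     a_join := @rjoin X;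
     a_comp := @rcomp X;
     a_one := Dq_one le;
     a_zero := Dq_zero le E alpha;
     a_tilde := Dq_tilde le E alpha;
     a_minus := Dq_minus le E alpha;
     a_prime := Dq_prime E alpha beta |}.

From Stdlib Require Import Setoid FunctionalExtensionality PropExtensionality ProofIrrelevance.

(* An up-set of E is a relation contained in E, and such a relation is the
   disjoint union of its restrictions to the E-classes.  Restriction to a class
   commutes with meet, join, converse, complement relative to E (which becomes
   the complement in the full square of the class) and with composition (a
   composite of relations inside E never leaves a class), and alpha, beta map
   each class to itself.  Hence Dq(E) is the product of the full algebras of
   its classes.  Conversely, the disjoint union of a family of full frames,
   with E relating elements of the same summand, has exactly these summands
   as its E-classes. *)

Lemma rel_ext {Z : Type} (R S : rel Z) : (forall x y, R x y <-> S x y) -> R = S.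
Proof.
  intros H; apply functional_extensionality; intro x;
    apply functional_extensionality; intro y; apply propositional_extensionality; auto.
Qed.

Lemma graph_rcomp {Z : Type} (f g : Z -> Z) :
  rcomp (graph f) (graph g) = graph (fun x => g (f x)).
Proof.
  apply rel_ext; intros x y; unfold rcomp, graph; split.
  - intros [z [<- <-]]; reflexivity.
  - intros <-; exists (f x); auto.
Qed.

Lemma releq_graph {Z : Type} (f g : Z -> Z) :
  releq (graph f) (graph g) <-> forall x, f x = g x.
Proof.
  unfold releq, graph; split.
  - intros H x; apply H; reflexivity.
  - intros H x y; rewrite H; tauto.
Qed.

Lemma self_inverse_iff {Z : Type} (b : Z -> Z) : self_inverse b <-> forall x, b (b x) = x.
Proof.
  unfold self_inverse; rewrite graph_rcomp; exact (releq_graph _ (fun x => x)).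
Qed.

Lemma fullrel_equivalence {Z : Type} : is_equivalence (@fullrel Z).
Proof. repeat split. Qed.

Lemma subrel_fullrel {Z : Type} (R : rel Z) : subrel R fullrel.
Proof. intros x y _; exact I. Qed.

(* [emb] identifies X with the disjoint union of the [Y i], the summands being
   the E-classes. *)
Record block_decomposition {X I : Type} (E : rel X) (Y : I -> Type)
    (emb : forall i, Y i -> X) : Prop := {
  emb_inj : forall i j a b, emb i a = emb j b -> existT Y i a = existT Y j b;
  emb_surj : forall x, exists i a, x = emb i a;
  E_emb : forall i a z, E (emb i a) z <-> exists b, z = emb i b
}.
Arguments emb_inj {X I E Y emb}.
Arguments emb_surj {X I E Y emb}.
Arguments E_emb {X I E Y emb}.

Section Blocks.
Context {X : Type} (E : rel X) {I : Type} {Y : I -> Type} (emb : forall i, Y i -> X).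
Hypothesis D : block_decomposition E Y emb.

Lemma emb_block_inj i a b : emb i a = emb i b -> a = b.
Proof. intros e; apply (emb_inj D), inj_pair2 in e; exact e. Qed.

Lemma E_emb_emb i a b : E (emb i a) (emb i b).
Proof. apply (E_emb D); eauto. Qed.

Lemma E_block x y : E x y -> exists i a b, x = emb i a /\ y = emb i b.
Proof.
  intros e; destruct (emb_surj D x) as [i [a ->]].
  apply (E_emb D) in e as [b ->]; eauto.
Qed.

Lemma E_refl x : E x x.
Proof. destruct (emb_surj D x) as [i [a ->]]; apply E_emb_emb. Qed.

Lemma E_sym x y : E x y -> E y x.
Proof. intros e; destruct (E_block x y e) as [i [a [b [-> ->]]]]; apply E_emb_emb. Qed.

Lemma E_trans x y z : E x y -> E y z -> E x z.
Proof.
  intros exy eyz; destruct (E_block x y exy) as [i [a [b [-> ->]]]].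
  apply (E_emb D) in eyz as [c ->]; apply E_emb_emb.
Qed.

Lemma E_equivalence : is_equivalence E.
Proof.
  split; [exact E_refl | split; [exact E_sym | exact E_trans]].
Qed.

Lemma rcomp_sub R S : subrel R E -> subrel S E -> subrel (rcomp R S) E.
Proof. intros HR HS x y [z [r s]]; apply E_trans with z; auto. Qed.

Lemma rcompl_sub R : subrel (rcompl E R) E.
Proof. intros x y [e _]; exact e. Qed.

Lemma conv_sub R : subrel R E -> subrel (conv R) E.
Proof. intros HR x y r; apply E_sym, HR, r. Qed.

Lemma rmeet_sub R S : subrel R E -> subrel (rmeet R S) E.
Proof. intros HR x y [r _]; apply HR, r. Qed.

Lemma rjoin_sub R S : subrel R E -> subrel S E -> subrel (rjoin R S) E.
Proof. intros HR HS x y [r | s]; auto. Qed.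

Definition blockwise (f : X -> X) (fY : forall i, Y i -> Y i) : Prop :=
  forall i a, f (emb i a) = emb i (fY i a).

Lemma blockwise_comp f g fY gY :
  blockwise f fY -> blockwise g gY ->
  blockwise (fun x => g (f x)) (fun i a => gY i (fY i a)).
Proof. intros Hf Hg i a; rewrite Hf, Hg; reflexivity. Qed.

Lemma graph_sub f fY : blockwise f fY -> subrel (graph f) E.
Proof.
  intros Hf x y <-; destruct (emb_surj D x) as [i [a ->]].
  rewrite Hf; apply E_emb_emb.
Qed.

Lemma blockwise_E_reflect f fY : blockwise f fY -> forall x y, E (f x) (f y) -> E x y.
Proof.
  intros Hf x y e; apply E_trans with (f x); [apply (graph_sub f fY Hf); reflexivity |].
  apply E_trans with (f y); [exact e | apply E_sym, (graph_sub f fY Hf); reflexivity].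
Qed.

Definition res (R : rel X) (i : I) : rel (Y i) := fun a b => R (emb i a) (emb i b).

Definition glue (g : forall i, rel (Y i)) : rel X :=
  fun x y => exists i a b, x = emb i a /\ y = emb i b /\ g i a b.

Lemma glue_emb g i a b : glue g (emb i a) (emb i b) <-> g i a b.
Proof.
  split; [| intros r; exists i, a, b; auto].
  intros [j [a' [b' [ea [eb r]]]]].
  apply (emb_inj D) in ea, eb.
  pose proof (f_equal (@projT1 _ _) ea) as e; cbn in e; subst j.
  apply inj_pair2 in ea, eb; subst; exact r.
Qed.

Lemma glue_sub g : subrel (glue g) E.
Proof. intros x y [i [a [b [-> [-> _]]]]]; apply E_emb_emb. Qed.

Lemma res_glue g : res (glue g) = g.
Proof.
  apply functional_extensionality_dep; intro i.
  apply rel_ext; intros a b; apply glue_emb.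
Qed.

Lemma glue_res R : subrel R E -> glue (res R) = R.
Proof.
  intros HR; apply rel_ext; intros x y; split.
  - intros [i [a [b [-> [-> r]]]]]; exact r.
  - intros r; destruct (E_block x y (HR x y r)) as [i [a [b [-> ->]]]].
    exists i, a, b; auto.
Qed.

Lemma glue_res_eq R g : subrel R E -> (forall i, res R i = g i) -> glue g = R.
Proof.
  intros HR Hg; rewrite <- (glue_res R HR); f_equal.
  apply functional_extensionality_dep; intro i; symmetry; apply Hg.
Qed.

Lemma res_rmeet R S i : res (rmeet R S) i = rmeet (res R i) (res S i).
Proof. reflexivity. Qed.

Lemma res_rjoin R S i : res (rjoin R S) i = rjoin (res R i) (res S i).
Proof. reflexivity. Qed.

Lemma res_conv R i : res (conv R) i = conv (res R i).
Proof. reflexivity. Qed.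

Lemma res_rcomp R S i : subrel R E -> res (rcomp R S) i = rcomp (res R i) (res S i).
Proof.
  intros HR; apply rel_ext; intros a b; unfold res, rcomp; split.
  - intros [z [r s]]; destruct (proj1 (E_emb D i a z) (HR _ _ r)) as [c ->].
    exists c; auto.
  - intros [c [r s]]; exists (emb i c); auto.
Qed.

Lemma res_rcompl R i : res (rcompl E R) i = rcompl fullrel (res R i).
Proof.
  apply rel_ext; intros a b; unfold res, rcompl; split.
  - intros [_ n]; split; [constructor | exact n].
  - intros [_ n]; split; [apply E_emb_emb | exact n].
Qed.

Lemma res_graph f fY i : blockwise f fY -> res (graph f) i = graph (fY i).
Proof.
  intros Hf; apply rel_ext; intros a b; unfold res, graph; rewrite Hf; split.
  - apply emb_block_inj.
  - intros ->; reflexivity.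
Qed.

Lemma poset_blocks le : subrel le E -> is_poset le <-> forall i, is_poset (res le i).
Proof.
  intros HE; split.
  - intros (refl & anti & trans) i; split; [|split]; unfold res.
    + intros a; apply refl.
    + intros a b r s; apply emb_block_inj, anti; assumption.
    + intros a b c; apply trans.
  - intros H; split; [|split].
    + intros x; destruct (emb_surj D x) as [i [a ->]]; apply (H i).
    + intros x y r s; destruct (E_block x y (HE _ _ r)) as [i [a [b [-> ->]]]].
      f_equal; apply (H i); assumption.
    + intros x y z r s; destruct (E_block x y (HE _ _ r)) as [i [a [b [-> ->]]]].
      destruct (proj1 (E_emb D i b z) (HE _ _ s)) as [c ->].
      apply (H i) with b; assumption.
Qed.

Lemma bijection_blocks f fY :
  blockwise f fY -> is_bijection f <-> forall i, is_bijection (fY i).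
Proof.
  intros Hf; split.
  - intros [inj surj] i; split.
    + intros a b e; apply emb_block_inj, inj; rewrite !Hf, e; reflexivity.
    + intros b; destruct (surj (emb i b)) as [x ex].
      assert (Hx : E (emb i b) x) by (rewrite <- ex; apply E_sym, (graph_sub f fY Hf); reflexivity).
      destruct (proj1 (E_emb D i b x) Hx) as [a ->].
      exists a; apply emb_block_inj; rewrite <- Hf; exact ex.
  - intros H; split.
    + intros x y e.
      assert (Exy : E x y) by (apply (blockwise_E_reflect f fY Hf); rewrite e; apply E_refl).
      destruct (E_block x y Exy) as [i [a [b [-> ->]]]].
      rewrite !Hf in e; apply emb_block_inj, (H i) in e; subst; reflexivity.
    + intros y; destruct (emb_surj D y) as [i [b ->]].
      destruct (proj2 (H i) b) as [a <-]; exists (emb i a); apply Hf.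
Qed.

Lemma preserves_blocks f fY R S :
  blockwise f fY -> subrel R E -> subrel S E ->
  (forall x y, R x y <-> S (f x) (f y)) <->
  (forall i a b, res R i a b <-> res S i (fY i a) (fY i b)).
Proof.
  intros Hf HR HS; unfold res; split.
  - intros H i a b; rewrite <- !Hf; apply H.
  - intros H x y; split; intros r.
    + destruct (E_block x y (HR _ _ r)) as [i [a [b [-> ->]]]].
      rewrite !Hf; apply H, r.
    + destruct (E_block x y (blockwise_E_reflect f fY Hf _ _ (HS _ _ r))) as [i [a [b [-> ->]]]].
      rewrite !Hf in r; apply H, r.
Qed.

Lemma order_automorphism_blocks le f fY :
  subrel le E -> blockwise f fY ->
  order_automorphism le f <-> forall i, order_automorphism (res le i) (fY i).
Proof.
  intros HE Hf; unfold order_automorphism.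
  rewrite (bijection_blocks f fY Hf), (preserves_blocks f fY le le Hf HE HE).
  firstorder.
Qed.

Lemma dual_order_automorphism_blocks le f fY :
  subrel le E -> blockwise f fY ->
  dual_order_automorphism le f <-> forall i, dual_order_automorphism (res le i) (fY i).
Proof.
  intros HE Hf; unfold dual_order_automorphism.
  rewrite (bijection_blocks f fY Hf), (preserves_blocks f fY le (conv le) Hf HE (conv_sub le HE)).
  firstorder.
Qed.

Lemma maps_eq_blocks f g fY gY :
  blockwise f fY -> blockwise g gY ->
  (forall x, f x = g x) <-> (forall i a, fY i a = gY i a).
Proof.
  intros Hf Hg; split.
  - intros H i a; apply emb_block_inj; rewrite <- Hf, <- Hg; apply H.
  - intros H x; destruct (emb_surj D x) as [i [a ->]]; rewrite Hf, Hg, H; reflexivity.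
Qed.

Lemma self_inverse_blocks b bY :
  blockwise b bY -> self_inverse b <-> forall i, self_inverse (bY i).
Proof.
  intros Hb; setoid_rewrite self_inverse_iff.
  apply (maps_eq_blocks _ (fun x => x) _ (fun _ a => a)); [apply blockwise_comp; exact Hb |].
  intros i a; reflexivity.
Qed.

Lemma conjugation_blocks a b aY bY :
  blockwise a aY -> blockwise b bY ->
  releq (graph b) (rcomp (rcomp (graph a) (graph b)) (graph a)) <->
  forall i, releq (graph (bY i)) (rcomp (rcomp (graph (aY i)) (graph (bY i))) (graph (aY i))).
Proof.
  intros Ha Hb; rewrite !graph_rcomp, releq_graph.
  transitivity (forall i y, bY i y = aY i (bY i (aY i y))).
  - apply maps_eq_blocks; [exact Hb | exact (blockwise_comp _ _ _ _ (blockwise_comp _ _ _ _ Ha Hb) Ha)].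
  - split; intros H i; specialize (H i); rewrite !graph_rcomp, releq_graph in *; exact H.
Qed.

Lemma DqFrame_blocks le alpha beta alY beY :
  subrel le E -> blockwise alpha alY -> blockwise beta beY ->
  DqFrame X le E alpha beta <-> forall i, DqFrame (Y i) (res le i) fullrel (alY i) (beY i).
Proof.
  intros HE Ha Hb; unfold DqFrame.
  rewrite (poset_blocks le HE), (order_automorphism_blocks le alpha alY HE Ha),
    (dual_order_automorphism_blocks le beta beY HE Hb), (self_inverse_blocks beta beY Hb),
    (conjugation_blocks alpha beta alY beY Ha Hb).
  split.
  - intros (Hpo & _ & _ & Hoa & Hdoa & Hsi & _ & _ & Hconj) i.
    refine (conj (Hpo i) (conj fullrel_equivalence (conj (subrel_fullrel _)
      (conj (Hoa i) (conj (Hdoa i) (conj (Hsi i) (conj (subrel_fullrel _)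
      (conj (subrel_fullrel _) (Hconj i))))))))).
  - intros H.
    refine (conj _ (conj E_equivalence (conj HE (conj _ (conj _ (conj _
      (conj (graph_sub alpha alY Ha) (conj (graph_sub beta beY Hb) _)))))))); intro i;
      destruct (H i) as (? & _ & _ & ? & ? & ? & _ & _ & ?); assumption.
Qed.

Section Dq_blocks.
Context (le : rel X) (alpha beta : X -> X) (alY beY : forall i, Y i -> Y i).
Hypothesis le_E : subrel le E.
Hypothesis alpha_blockwise : blockwise alpha alY.
Hypothesis beta_blockwise : blockwise beta beY.

Lemma Dq_zero_sub : subrel (Dq_zero le E alpha) E.
Proof.
  apply rcomp_sub; [exact (graph_sub _ _ alpha_blockwise) | apply conv_sub, rcompl_sub].
Qed.

Lemma Dq_prime_sub R : subrel (Dq_prime E alpha beta R) E.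
Proof.
  pose proof (graph_sub _ _ alpha_blockwise); pose proof (graph_sub _ _ beta_blockwise).
  repeat apply rcomp_sub; auto using rcompl_sub.
Qed.

Lemma res_Dq_zero i : res (Dq_zero le E alpha) i = Dq_zero (res le i) fullrel (alY i).
Proof.
  unfold Dq_zero.
  rewrite res_rcomp, (res_graph _ _ _ alpha_blockwise), res_conv, res_rcompl;
    [reflexivity | exact (graph_sub _ _ alpha_blockwise)].
Qed.

Lemma res_Dq_tilde R i :
  subrel R E -> res (Dq_tilde le E alpha R) i = Dq_tilde (res le i) fullrel (alY i) (res R i).
Proof.
  intros HR; unfold Dq_tilde.
  rewrite res_rcompl, res_rcomp, res_conv, res_rcompl, res_Dq_zero;
    [reflexivity | exact (conv_sub _ HR)].
Qed.

Lemma res_Dq_minus R i :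
  res (Dq_minus le E alpha R) i = Dq_minus (res le i) fullrel (alY i) (res R i).
Proof.
  unfold Dq_minus.
  rewrite res_rcompl, res_rcomp, res_conv, res_rcompl, res_Dq_zero;
    [reflexivity | apply rcompl_sub].
Qed.

Lemma res_Dq_prime R i :
  res (Dq_prime E alpha beta R) i = Dq_prime fullrel (alY i) (beY i) (res R i).
Proof.
  pose proof (graph_sub _ _ alpha_blockwise); pose proof (graph_sub _ _ beta_blockwise).
  unfold Dq_prime.
  rewrite !res_rcomp, (res_graph _ _ _ alpha_blockwise), (res_graph _ _ _ beta_blockwise),
    res_rcompl; auto using rcomp_sub, rcompl_sub.
Qed.

Lemma res_upset R i : is_upset le E R -> is_upset (res le i) fullrel (res R i).
Proof.
  intros [_ up]; split; [apply subrel_fullrel |].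
  intros u v x y r _ [xu vy]; apply (up _ _ _ _ r); [apply E_emb_emb | split; assumption].
Qed.

Lemma glue_upset g : (forall i, is_upset (res le i) fullrel (g i)) -> is_upset le E (glue g).
Proof.
  intros H; split; [apply glue_sub |].
  intros u v x y [i [a [b [-> [-> r]]]]] _ [xu vy].
  destruct (proj1 (E_emb D i a x) (E_sym _ _ (le_E _ _ xu))) as [c ->].
  destruct (proj1 (E_emb D i b y) (le_E _ _ vy)) as [d ->].
  apply glue_emb, (proj2 (H i) a b); [exact r | constructor | split; assumption].
Qed.

Theorem Dq_iso_blocks :
  Alg_iso (Dq X le E alpha beta)
          (Alg_prod I (fun i => Dq (Y i) (res le i) fullrel (alY i) (beY i))).
Proof.
  exists res; cbn.
  refine (conj _ (conj _ (conj _ (conj _ (conj _ (conj _ (conj _ (conj _ (conj _ (conj _ _))))))))));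
    try (intros; reflexivity).
  - intros R HR i; apply res_upset, HR.
  - intros R S [HR _] [HS _] e; rewrite <- (glue_res R HR), <- (glue_res S HS), e; reflexivity.
  - intros g Hg; exists (glue g); split; [apply glue_upset, Hg | apply res_glue].
  - intros R S [HR _] _; apply functional_extensionality_dep; intro i; apply res_rcomp, HR.
  - apply functional_extensionality_dep; intro i; apply res_Dq_zero.
  - intros R [HR _]; apply functional_extensionality_dep; intro i; apply res_Dq_tilde, HR.
  - intros R _; apply functional_extensionality_dep; intro i; apply res_Dq_minus.
  - intros R _; apply functional_extensionality_dep; intro i; apply res_Dq_prime.
Qed.

Theorem blocks_iso_Dq :
  Alg_iso (Alg_prod I (fun i => Dq (Y i) (res le i) fullrel (alY i) (beY i)))
          (Dq X le E alpha beta).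
Proof.
  exists glue; cbn.
  refine (conj _ (conj _ (conj _ (conj _ (conj _ (conj _ (conj _ (conj _ (conj _ (conj _ _)))))))))).
  - intros g Hg; apply glue_upset, Hg.
  - intros g h _ _ e; rewrite <- (res_glue g), <- (res_glue h), e; reflexivity.
  - intros R HR; exists (res R); split; [intro i; apply res_upset, HR | apply glue_res, HR].
  - intros g h _ _; apply glue_res_eq; [apply rmeet_sub, glue_sub |].
    intro i; rewrite res_rmeet, !res_glue; reflexivity.
  - intros g h _ _; apply glue_res_eq; [apply rjoin_sub; apply glue_sub |].
    intro i; rewrite res_rjoin, !res_glue; reflexivity.
  - intros g h _ _; apply glue_res_eq; [apply rcomp_sub; apply glue_sub |].
    intro i; rewrite res_rcomp, !res_glue; [reflexivity | apply glue_sub].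
  - apply glue_res, le_E.
  - apply glue_res_eq; [apply Dq_zero_sub | apply res_Dq_zero].
  - intros g _; apply glue_res_eq; [apply rcompl_sub |].
    intro i; rewrite res_Dq_tilde, res_glue; [reflexivity | apply glue_sub].
  - intros g _; apply glue_res_eq; [apply rcompl_sub |].
    intro i; rewrite res_Dq_minus, res_glue; reflexivity.
  - intros g _; apply glue_res_eq; [apply Dq_prime_sub |].
    intro i; rewrite res_Dq_prime, res_glue; reflexivity.
Qed.
End Dq_blocks.
End Blocks.

Section Classes.
Context {X : Type} (E : rel X).
Hypothesis E_equiv : is_equivalence E.

Definition eq_class : Type := {C : X -> Prop | exists x, C = E x}.
Definition class_elt (C : eq_class) : Type := {x : X | proj1_sig C x}.
Definition class_emb (C : eq_class) (a : class_elt C) : X := proj1_sig a.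

Lemma class_closed (C : eq_class) y z : proj1_sig C y -> E y z -> proj1_sig C z.
Proof.
  destruct E_equiv as (_ & _ & Etrans); destruct C as [P [c ->]]; cbn; eauto.
Qed.

Lemma class_unique (C C' : eq_class) x : proj1_sig C x -> proj1_sig C' x -> C = C'.
Proof.
  destruct E_equiv as (_ & Esym & Etrans).
  destruct C as [P [c ->]], C' as [P' [c' ->]]; cbn; intros h h'.
  apply eq_sig_hprop; [intros; apply proof_irrelevance | cbn].
  apply functional_extensionality; intro z; apply propositional_extensionality.
  split; intros e; eauto.
Qed.

Definition class_restrict (f : X -> X) (Hf : subrel (graph f) E) (C : eq_class)
    (a : class_elt C) : class_elt C :=
  exist _ (f (proj1_sig a)) (class_closed C _ _ (proj2_sig a) (Hf _ _ eq_refl)).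

Lemma class_restrict_blockwise f Hf : blockwise class_emb f (class_restrict f Hf).
Proof. intros C a; reflexivity. Qed.

Lemma class_decomposition : block_decomposition E class_elt class_emb.
Proof.
  destruct E_equiv as (Erefl & Esym & Etrans); split.
  - intros C C' [x hx] [y hy]; cbn; intros <-.
    destruct (class_unique C C' x hx hy).
    f_equal; apply eq_sig_hprop; [intros; apply proof_irrelevance | reflexivity].
  - intros x; exists (exist _ (E x) (ex_intro _ x eq_refl)), (exist _ x (Erefl x)); reflexivity.
  - intros [P [c ->]] [x hx] z; cbn in *; split.
    + intros e; exists (exist _ z (Etrans _ _ _ hx e)); reflexivity.
    + intros [[y hy] ->]; cbn; eauto.
Qed.
End Classes.

Section DisjointUnion.
Context {I : Type} (Y : I -> Type).

Definition same_summand : rel (sigT Y) := fun p q => projT1 p = projT1 q.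

Definition sigma_map (f : forall i, Y i -> Y i) (p : sigT Y) : sigT Y :=
  existT Y (projT1 p) (f _ (projT2 p)).

Lemma sigma_map_blockwise f : blockwise (existT Y) (sigma_map f) f.
Proof. intros i a; reflexivity. Qed.

Lemma sigma_decomposition : block_decomposition same_summand Y (existT Y).
Proof.
  split.
  - intros i j a b e; exact e.
  - intros [i a]; eauto.
  - intros i a [j b]; unfold same_summand; cbn; split.
    + intros <-; eauto.
    + intros [b' e]; exact (eq_sym (f_equal (@projT1 _ _) e)).
Qed.
End DisjointUnion.

Theorem theorem4p4 :
  (* every algebra in EDqRA is isomorphic to a direct product of FDqRAs *)
  (forall (X : Type) (le E : rel X) (alpha beta : X -> X),
     DqFrame X le E alpha beta ->
     exists (I : Type) (Y : I -> Type) (leY : forall i, rel (Y i))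
            (alY beY : forall i, Y i -> Y i),
       (forall i, DqFrame (Y i) (leY i) fullrel (alY i) (beY i)) /\
       Alg_iso (Dq X le E alpha beta)
               (Alg_prod I (fun i => Dq (Y i) (leY i) fullrel (alY i) (beY i))))
  /\
  (* every direct product of FDqRAs is isomorphic to an EDqRA *)
  (forall (I : Type) (Y : I -> Type) (leY : forall i, rel (Y i))
          (alY beY : forall i, Y i -> Y i),
     (forall i, DqFrame (Y i) (leY i) fullrel (alY i) (beY i)) ->
     exists (X : Type) (le E : rel X) (alpha beta : X -> X),
       DqFrame X le E alpha beta /\
       Alg_iso (Alg_prod I (fun i => Dq (Y i) (leY i) fullrel (alY i) (beY i)))
               (Dq X le E alpha beta)).
Proof.
  split.
  - intros X le E alpha beta H.
    pose proof H as (_ & HE & Hle & _ & _ & _ & Ha & Hb & _).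
    pose proof (class_decomposition E HE) as D.
    pose proof (class_restrict_blockwise E HE alpha Ha) as Ha'.
    pose proof (class_restrict_blockwise E HE beta Hb) as Hb'.
    exists (eq_class E), (class_elt E), (res (class_emb E) le),
      (class_restrict E HE alpha Ha), (class_restrict E HE beta Hb).
    split.
    + exact (proj1 (DqFrame_blocks E _ D le alpha beta _ _ Hle Ha' Hb') H).
    + exact (Dq_iso_blocks E _ D le alpha beta _ _ Hle Ha' Hb').
  - intros I Y leY alY beY HY.
    pose proof (sigma_decomposition Y) as D.
    pose proof (sigma_map_blockwise Y alY) as Ha; pose proof (sigma_map_blockwise Y beY) as Hb.
    pose proof (glue_sub _ _ D leY) as Hle.
    exists (sigT Y), (glue (existT Y) leY), (same_summand Y), (sigma_map Y alY), (sigma_map Y beY).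
    pose proof (blocks_iso_Dq _ _ D _ _ _ _ _ Hle Ha Hb) as iso.
    rewrite (res_glue _ _ D) in iso.
    split; [| exact iso].
    apply (DqFrame_blocks _ _ D _ _ _ _ _ Hle Ha Hb).
    rewrite (res_glue _ _ D); exact HY.
Qed.
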